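(* Let $A=\mathbb{Z}_{2^{m_1}}\times \mathbb{Z}_{2^{m_2}}\times\cdots\times\mathbb{Z}_{2^{m_k}}\times A_{2'}$, where $k\ge 1$, $m_i\ge 1$ for each $1\le i\le k$, and $A_{2'}$ is a finite abelian group of odd order. Let $H$ be a subgroup of $A$. Then $H$ is a subgroup perfect code of $A$ if and only if either $H$ is a subgroup isomorphic to $$\mathbb{Z}_{2^{m_1-1}}\times \mathbb{Z}_{2^{m_2-1}}\times\cdots\times\mathbb{Z}_{2^{m_k-1}}\times A_{2'},$$ or $H$ contains an element that is not a square in $A$.
   Context: All groups are finite abelian, written additively with identity $0$. An element $x$ of $A$ is a square if $x=2y$ for some $y\in A$; a subset of $A$ is square-free if it contains no squares. For a square-free subset $T\subseteq A$, the Cayley sum graph $\mathrm{CayS}(A,T)$ is the simple graph with vertex set $A$ in which two distinct vertices $x,y$ are adjacent iff $x+y\in T$. A subset $C$ of the vertex set of a graph is a perfect code if every vertex is at distance at most one from exactly one vertex of $C$. A subgroup $H$ of $A$ is a subgroup perfect code of $A$ if $H$ is a perfect code of $\mathrm{CayS}(A,T)$ for some square-free subset $T\subseteq A$ (the empty set allowed). *)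

(* Finite abelian groups are rendered as (abelian) subgroups
   of a finGroupType; the group law is written multiplicatively (x * y for the
   paper's x + y, 1 for 0, y * y for 2y). *)
From mathcomp Require Import all_boot all_order all_fingroup all_solvable.
Set Implicit Arguments. Unset Strict Implicit. Unset Printing Implicit Defensive.

Local Open Scope group_scope.

Section SumGraph.
Variable gT : finGroupType.

Definition is_square (A : {set gT}) (x : gT) : bool :=
  [exists y in A, x == y * y].

Definition square_free (A T : {set gT}) : bool :=
  [forall x in T, ~~ is_square A x].

Definition cays_adj (T : {set gT}) (x y : gT) : bool :=
  (x != y) && (x * y \in T).

Definition perfect_code (A T C : {set gT}) : Prop :=
  C \subset A /\
  forall v, v \in A -> #|[set c in C | (c == v) || cays_adj T v c]| = 1%N.

Definition subgroup_perfect_code (A H : {set gT}) : Prop :=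
  exists T : {set gT}, [/\ T \subset A, square_free A T & perfect_code A T H].

End SumGraph.

From mathcomp Require Import all_boot all_order all_fingroup all_solvable.
Set Implicit Arguments. Unset Strict Implicit. Unset Printing Implicit Defensive.
Local Open Scope group_scope.

(* A subgroup H of A is a perfect code of some CayS(A,T) exactly
   when every coset vH <> H contains a non-square: choosing one non-square
   y_v in each such coset and taking T to be the chosen elements, v is
   dominated by the unique c in H with vc = y_v; conversely, the edge vc that
   dominates v is a non-square in vH.  In an abelian group the squares form a
   subgroup A^2, so the condition holds iff H is not contained in A^2 (shift a
   square of vH by a non-square of H) or H = A^2 (a coset vH inside A^2 has no
   non-square).  Squaring halves each cyclic 2-factor and fixes the odd part,
   so A^2 is a product of cycles of orders 2^(m_i - 1) with a copy of A_2';
   a subgroup of A^2 of that shape has the order of A^2, hence equals it. *)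

Section PerfectCodeCosets.
Variable gT : finGroupType.
Implicit Types A H : {group gT}.

Definition nonsquare_in_cosets A H : Prop :=
  forall v, v \in A -> v \notin H -> exists2 y, y \in v *: H & ~~ is_square A y.

Definition pick_nonsquare A (C : {set gT}) : gT :=
  odflt 1 [pick y in C | ~~ is_square A y].

Lemma pick_nonsquareP A (C : {set gT}) y :
  y \in C -> ~~ is_square A y ->
  pick_nonsquare A C \in C /\ ~~ is_square A (pick_nonsquare A C).
Proof.
move=> yC ysq; rewrite /pick_nonsquare; case: pickP => [z /andP[] // | none].
by have := none y; rewrite yC ysq.
Qed.

Definition coset_code A H : {set gT} :=
  [set x in A | (x \notin H) && (x == pick_nonsquare A (x *: H))].

Section CosetCode.
Variables A H : {group gT}.
Hypotheses (sHA : H \subset A) (nsqH : nonsquare_in_cosets A H).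

Lemma pick_nonsquare_coset v :
  v \in A -> v \notin H ->
  v^-1 * pick_nonsquare A (v *: H) \in H /\ ~~ is_square A (pick_nonsquare A (v *: H)).
Proof.
move=> vA vH; have [y yvH ysq] := nsqH vA vH.
by have [] := pick_nonsquareP yvH ysq; rewrite mem_lcoset.
Qed.

Lemma coset_code_square_free : square_free A (coset_code A H).
Proof.
apply/forall_inP=> x; rewrite inE => /and3P[xA xH /eqP->].
by have [] := pick_nonsquare_coset xA xH.
Qed.

Lemma perfect_code_coset_code : perfect_code A (coset_code A H) H.
Proof.
split=> // v vA; apply/eqP/cards1P.
have [vH | vH] := boolP (v \in H).
  exists v; apply/setP=> c; rewrite !inE; have [-> | neq_cv] := eqVneq c v.
    by rewrite vH.
  apply/andP=> -[cH]; rewrite /cays_adj inE => /andP[_ /and3P[_]].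
  by rewrite groupM.
set y := pick_nonsquare A (v *: H); have [yH _] := pick_nonsquare_coset vA vH.
exists (v^-1 * y); apply/setP=> c; rewrite !inE.
have [cH | cH] /= := boolP (c \in H); last first.
  by apply/esym/negbTE; apply: contraNneq cH => ->.
have neq_vc : v != c by apply: contraNneq vH => ->.
have vcH : v * c *: H = v *: H by apply/lcoset_eqP; rewrite mem_lcoset mulKg.
rewrite eq_sym (negbTE neq_vc) /cays_adj neq_vc inE.
by rewrite (groupM vA (subsetP sHA c cH)) groupMr // vH vcH (canF_eq (mulKg v)).
Qed.

End CosetCode.

Lemma subgroup_perfect_codeP A H :
  H \subset A -> subgroup_perfect_code A H <-> nonsquare_in_cosets A H.
Proof.
move=> sHA; split=> [[T [_ sqfT [_ pcT]]] v vA vH | nsqH]; last first.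
  exists (coset_code A H); split; last exact: perfect_code_coset_code.
    by apply/subsetP=> x; rewrite inE => /andP[].
  exact: coset_code_square_free.
have /eqP/cards1P[c defc] := pcT v vA.
have : c \in [set c in H | (c == v) || cays_adj T v c] by rewrite defc set11.
rewrite inE => /andP[cH /orP[/eqP eq_cv | /andP[_ vcT]]].
  by rewrite -eq_cv cH in vH.
by exists (v * c); [rewrite mem_lcoset mulKg | apply: (forall_inP sqfT)].
Qed.

Section SquareSubgroup.
Variables A H S : {group gT}.
Hypothesis squaresE : forall x, is_square A x = (x \in S).

Lemma nonsquare_in_cosetsP :
  nonsquare_in_cosets A H <-> H :=: S \/ exists x, x \in H /\ ~~ is_square A x.
Proof.
split=> [nsqH | [defH | [h [hH hsq]]] v vA vH].
- have [sHS | /subsetPn[x xH xS]] := boolP (H \subset S); last first.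
    by right; exists x; rewrite squaresE.
  left; apply/eqP; rewrite eqEsubset sHS; apply/subsetP=> v vS.
  apply/negPn/negP=> vH; have vA : v \in A.
    by move: vS; rewrite -squaresE => /exists_inP[y yA /eqP->]; apply: groupM.
  have [_ /lcosetP[h hH ->]] := nsqH v vA vH.
  by rewrite squaresE (groupM vS (subsetP sHS h hH)).
- by exists v; rewrite ?lcoset_refl // squaresE -defH.
- have [vsq | vnsq] := boolP (is_square A v); last by exists v; rewrite ?lcoset_refl.
  exists (v * h); first by rewrite mem_lcoset mulKg.
  by rewrite squaresE groupMl -?squaresE.
Qed.

End SquareSubgroup.
End PerfectCodeCosets.

Section StableProducts.
Variables (gT : finGroupType) (D : {group gT}) (f : {morphism D >-> gT}).

Lemma morphim_stable_dprod (K H G : {group gT}) :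
    G \subset D -> K \x H = G -> f @* K \subset K -> f @* H \subset H ->
  f @* K \x f @* H = f @* G.
Proof.
move=> sGD defG sfK sfH; have [_ _ _ tiKH] := dprodP defG.
rewrite dprodEcp; first exact: morphim_cprod sGD (dprodWcp defG).
by apply/trivgP; rewrite -tiKH setISS.
Qed.

Lemma morphim_stable_bigdprod I r (P : pred I) (F : I -> {group gT}) (G : {group gT}) :
    G \subset D -> \big[dprod/1]_(i <- r | P i) F i = G ->
    (forall i, P i -> f @* F i \subset F i) ->
  \big[dprod/1]_(i <- r | P i) f @* F i = f @* G.
Proof.
move=> sGD defG sfF.
(* The induction also needs the stability of the partial products. *)
suff [] : \big[dprod/1]_(i <- r | P i) f @* F i = f @* G /\ f @* G \subset G by [].
elim/big_rec2: _ G sGD defG => [|i fB B Pi IH] G sGD defG.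
  by rewrite -defG morphim1 sub1G.
case/dprodP: defG (defG) => [[Fi Gi defFi defB] _ _ _].
rewrite defB => defG; have [_ /andP[sGiG _]] := dprod_normal2 defG.
have [-> sfGi] := IH Gi (subset_trans sGiG sGD) defB.
have defFG := morphim_stable_dprod sGD defG (sfF i Pi) sfGi.
by split=> //; rewrite -(dprodW defFG) -(dprodW defG) mulgSS ?sfF.
Qed.

End StableProducts.

Lemma abelian_bigdprod (gT : finGroupType) I r (P : pred I)
    (F : I -> {group gT}) (G : {group gT}) :
  \big[dprod/1]_(i <- r | P i) F i = G -> (forall i, P i -> abelian (F i)) ->
  abelian G.
Proof.
move=> defG cFF; elim/big_rec: _ G defG => [|i B Pi IH] G defG.
  by rewrite -defG abelian1.
case/dprodP: defG => [[Fi Gi defFi defB]] <- cFG _.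
by rewrite defFi defB abelianM -defFi cFF // IH // -defB.
Qed.

Section Squaring.
Variables (gT : finGroupType) (A : {group gT}).
Hypothesis cAA : abelian A.

Lemma squaring_morphM : {in A &, {morph (fun x : gT => x ^+ 2) : x y / x * y}}.
Proof. by move=> x y xA yA /=; rewrite expgMn //; apply: (centsP cAA). Qed.

Definition squaring := Morphism squaring_morphM.

Lemma is_square_squaring x : is_square A x = (x \in squaring @* A).
Proof.
rewrite morphimEdom; apply/exists_inP/imsetP=> [[y yA /eqP->] | [y yA ->]];
  by exists y.
Qed.

Lemma morphim_squaring_sub (G : {group gT}) : G \subset A -> squaring @* G \subset G.
Proof.
by move=> sGA; rewrite morphimEsub //; apply/subsetP=> _ /imsetP[x xG ->]; apply: groupX.
Qed.

Lemma morphim_squaring_odd (G : {group gT}) :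
  G \subset A -> odd #|G| -> squaring @* G = G.
Proof.
move=> sGA oddG; apply/eqP; rewrite eqEsubset morphim_squaring_sub //=.
apply/subsetP=> x xG; rewrite morphimEsub //; apply/imsetP.
exists (x ^+ expg_invn G 2); first exact: groupX.
by rewrite /= expgAC expgK ?coprimen2.
Qed.

Lemma squaring_dprod_cycles (I : finType) (a : I -> gT) (B : {group gT}) :
    (\big[dprod/1]_i <[a i]>) \x B = A -> odd #|B| ->
  (\big[dprod/1]_i <[a i ^+ 2]>) \x B = squaring @* A.
Proof.
move=> defA oddB; have [[P _ defP _] _ _ _] := dprodP defA; rewrite defP in defA.
have [/andP[sPA _] /andP[sBA _]] := dprod_normal2 defA.
have saA i : <[a i]> \subset A.
  by apply: subset_trans sPA; rewrite -(bigdprodWY defP) sub_gen // (bigcup_sup i).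
rewrite -(morphim_squaring_odd sBA oddB).
rewrite -(morphim_stable_dprod (subxx A) defA) ?morphim_squaring_sub //.
rewrite -(morphim_stable_bigdprod sPA defP) => [|i _]; last first.
  exact: morphim_squaring_sub (saA i).
by congr (_ \x _); apply: eq_bigr => i _; rewrite morphim_cycle // -cycle_subG.
Qed.

End Squaring.

Lemma abelian_dprod_cycles (gT : finGroupType) (I : finType) (a : I -> gT)
    (B A : {group gT}) :
  (\big[dprod/1]_i <[a i]>) \x B = A -> abelian B -> abelian A.
Proof.
move=> defA cBB; have [[P _ defP _] _ cPB _] := dprodP defA.
rewrite defP in defA cPB; rewrite -(dprodW defA) abelianM cBB cPB !andbT.
by apply: (abelian_bigdprod defP) => i _; apply: cycle_abelian.
Qed.

Lemma card_dprod_cycles (gT : finGroupType) I (r : seq I) (P : pred I)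
    (h : I -> gT) (K G : {group gT}) :
  (\big[dprod/1]_(i <- r | P i) <[h i]>) \x K = G ->
  #|G| = (\prod_(i <- r | P i) #[h i] * #|K|)%N.
Proof.
move=> defG; have [[Q _ defQ _] _ _ _] := dprodP defG.
by rewrite -(dprod_card defG) defQ -(bigdprod_card defQ).
Qed.



Theorem theorem3p1 (gT : finGroupType) (A : {group gT}) (k : nat)
    (m : 'I_k -> nat) (a : 'I_k -> gT) (B : {group gT})
    (hk : (0 < k)%N) (hm : forall i, (0 < m i)%N)
    (ha : forall i, #[a i] = (2 ^ m i)%N)
    (hBab : abelian B) (hB : odd #|B|)
    (hA : (\big[dprod/1]_(i < k) <[a i]>) \x B = A)
    (H : {group gT}) (hH : H \subset A) :
  subgroup_perfect_code A H <->
  ((exists (h : 'I_k -> gT) (K : {group gT}),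
       [/\ forall i, #[h i] = (2 ^ (m i).-1)%N,
           K \isog B &
           (\big[dprod/1]_(i < k) <[h i]>) \x K = H])
   \/ exists x, x \in H /\ ~~ is_square A x).
Proof.
have cAA := abelian_dprod_cycles hA hBab.
have defS := squaring_dprod_cycles cAA hA hB.
have ha2 i : #[a i ^+ 2] = (2 ^ (m i).-1)%N.
  by have := orderXexp 1 (ha i); rewrite expn1 subn1.
apply: iff_trans (subgroup_perfect_codeP hH) _.
apply: iff_trans (nonsquare_in_cosetsP _ (is_square_squaring cAA)) _.
split=> [[defH | nsqH] | [[h [K [hh isoK defH]]] | nsqH]]; try by right.
  left; exists (fun i => a i ^+ 2), B.
  by split=> //; [exact: isog_refl | rewrite defH].
have [sHS | /subsetPn[x xH xS]] := boolP (H \subset squaring cAA @* A); last first.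
  by right; exists x; rewrite is_square_squaring.
left; apply/eqP; rewrite eqEcard sHS (card_dprod_cycles defS) (card_dprod_cycles defH).
rewrite (card_isog isoK) (eq_bigr _ (fun i _ => ha2 i)).
by rewrite (eq_bigr _ (fun i _ => hh i)) /=.
Qed.
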